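(* On a translating soliton $f:M^2\to\mathbb{R}^3$ the Gauss curvature $K$ satisfies $$K=\Delta\log\sqrt{1+H^2}-\frac{2}{(1+H^2)^2}|\nabla H|^2+\frac{H^4}{1+H^2}=\frac{H}{1+H^2}\Delta H-\frac{|\nabla H|^2}{1+H^2}+\frac{H^4}{1+H^2}.$$ Moreover, at each point where $H>0$, $$K=\frac{H^2}{1+H^2}\Delta\log(e^uH)=\frac{H^2}{1+H^2}\big(\Delta\log H+H^2\big),$$ where $u=\langle f,\operatorname{v}\rangle$.
   Context: A translating soliton is an immersion $f:M^2\to\mathbb{R}^3$ of an oriented surface with unit normal $\xi$ whose scalar mean curvature $H$ (trace of $A(v,w)=-\langle\vec A(v,w),\xi\rangle$, $\vec A$ the second fundamental form) satisfies $H=-\langle\operatorname{v},\xi\rangle$ with $\operatorname{v}=\operatorname{e}_3$. $\nabla$ and $\Delta$ are the gradient and Laplacian of the induced metric, and $K$ its Gauss curvature. *)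

From Stdlib Require Import Reals Lra List ClassicalEpsilon.
Open Scope R_scope.

(* Dx F x y = d/dt F(t,y) at t = x (chosen by epsilon; it is the derivative
   whenever the latter exists). *)
Definition Dx (F : R -> R -> R) (x y : R) : R :=
  epsilon (inhabits 0) (fun l => derivable_pt_lim (fun t => F t y) x l).
Definition Dy (F : R -> R -> R) (x y : R) : R :=
  epsilon (inhabits 0) (fun l => derivable_pt_lim (fun t => F x t) y l).
Definition Dp (i : nat) (F : R -> R -> R) : R -> R -> R :=
  match i with O => Dx F | _ => Dy F end.
Fixpoint iterD (w : list nat) (F : R -> R -> R) : R -> R -> R :=
  match w with nil => F | i :: w' => Dp i (iterD w' F) end.

Definition cont2_at (F : R -> R -> R) (x y : R) : Prop :=
  forall eps, 0 < eps -> exists d, 0 < d /\ forall x' y',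
    Rabs (x' - x) < d -> Rabs (y' - y) < d -> Rabs (F x' y' - F x y) < eps.

Definition open2 (U : R -> R -> Prop) : Prop :=
  forall x y, U x y -> exists d, 0 < d /\ forall x' y',
    Rabs (x' - x) < d -> Rabs (y' - y) < d -> U x' y'.

Definition smooth_on (U : R -> R -> Prop) (F : R -> R -> R) : Prop :=
  forall (w : list nat) x y, U x y ->
    cont2_at (iterD w F) x y /\
    (exists l, derivable_pt_lim (fun t => iterD w F t y) x l) /\
    (exists l, derivable_pt_lim (fun t => iterD w F x t) y l).

Definition dot3 (a b : nat -> R) : R := a 0%nat * b 0%nat + a 1%nat * b 1%nat + a 2%nat * b 2%nat.
Definition cross3 (a b : nat -> R) : nat -> R := fun k =>
  match k with
  | O => a 1%nat * b 2%nat - a 2%nat * b 1%nat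
  | 1%nat => a 2%nat * b 0%nat - a 0%nat * b 2%nat
  | _ => a 0%nat * b 1%nat - a 1%nat * b 0%nat
  end.
Definition sum2 (F : nat -> R) : R := F 0%nat + F 1%nat.

(* A local parametrization f : U ⊆ R^2 -> R^3, f k x y = k-th component. *)
Definition Surf := nat -> R -> R -> R.
Definition vat (f : Surf) (x y : R) : nat -> R := fun k => f k x y.
Definition fd (i : nat) (f : Surf) : Surf := fun k => Dp i (f k).
Definition fdd (i j : nat) (f : Surf) : Surf := fun k => Dp i (Dp j (f k)).

Definition metric (f : Surf) (i j : nat) (x y : R) : R :=
  dot3 (vat (fd i f) x y) (vat (fd j f) x y).
Definition detg (f : Surf) (x y : R) : R :=
  metric f 0 0 x y * metric f 1 1 x y - metric f 0 1 x y * metric f 1 0 x y.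
Definition ginv (f : Surf) (i j : nat) (x y : R) : R :=
  match i, j with
  | O, O => metric f 1 1 x y / detg f x y
  | S _, S _ => metric f 0 0 x y / detg f x y
  | _, _ => - metric f 0 1 x y / detg f x y
  end.

(* unit normal xi = sigma * (f_x × f_y)/|f_x × f_y|, sigma = ±1 fixes the orientation *)
Definition normal (sigma : R) (f : Surf) (x y : R) : nat -> R := fun k =>
  sigma * cross3 (vat (fd 0 f) x y) (vat (fd 1 f) x y) k /
  sqrt (dot3 (cross3 (vat (fd 0 f) x y) (vat (fd 1 f) x y))
             (cross3 (vat (fd 0 f) x y) (vat (fd 1 f) x y))).

(* scalar second fundamental form A_ij = -<vec A(f_i,f_j), xi> = -<f_ij, xi> *)
Definition sff (sigma : R) (f : Surf) (i j : nat) (x y : R) : R :=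
  - dot3 (vat (fdd i j f) x y) (normal sigma f x y).
Definition meanH (sigma : R) (f : Surf) (x y : R) : R :=
  sum2 (fun i => sum2 (fun j => ginv f i j x y * sff sigma f i j x y)).

Definition christ (f : Surf) (k i j : nat) (x y : R) : R :=
  / 2 * sum2 (fun l => ginv f k l x y *
     (Dp i (metric f j l) x y + Dp j (metric f i l) x y - Dp l (metric f i j) x y)).
(* R(d_i,d_j)d_k = Riem l i j k d_l,  R(X,Y)Z = ∇_X∇_Y Z - ∇_Y∇_X Z - ∇_[X,Y] Z *)
Definition Riem (f : Surf) (l i j k : nat) (x y : R) : R :=
  Dp i (christ f l j k) x y - Dp j (christ f l i k) x y +
  sum2 (fun m => christ f m j k x y * christ f l i m x y
                 - christ f m i k x y * christ f l j m x y).
Definition gaussK (f : Surf) (x y : R) : R :=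
  sum2 (fun l => metric f 0 l x y * Riem f l 0 1 1 x y) / detg f x y.

Definition laplacian (f : Surf) (phi : R -> R -> R) (x y : R) : R :=
  / sqrt (detg f x y) *
  sum2 (fun i => sum2 (fun j =>
    Dp i (fun a b => sqrt (detg f a b) * ginv f i j a b * Dp j phi a b) x y)).
Definition gradsq (f : Surf) (phi : R -> R -> R) (x y : R) : R :=
  sum2 (fun i => sum2 (fun j => ginv f i j x y * Dp i phi x y * Dp j phi x y)).

Definition immersion_on (U : R -> R -> Prop) (f : Surf) : Prop :=
  forall x y, U x y ->
    dot3 (cross3 (vat (fd 0 f) x y) (vat (fd 1 f) x y))
         (cross3 (vat (fd 0 f) x y) (vat (fd 1 f) x y)) <> 0.

(* translating soliton with velocity v = e_3 : H = -<e_3, xi> *)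
Definition translating_soliton (U : R -> R -> Prop) (sigma : R) (f : Surf) : Prop :=
  forall x y, U x y -> meanH sigma f x y = - normal sigma f x y 2%nat.

From Pilot Require Import Defs.
From Stdlib Require Import Reals Lra Lia List ClassicalEpsilon FunctionalExtensionality PropExtensionality.
From Coquelicot Require Import Coquelicot.
Open Scope R_scope.

(* On a translator H = -xi_3, so for the height u = f_3 the Weingarten equation gives
   grad H = -A(grad u), and Codazzi (div A = grad H, Hess u = -xi_3 A) gives
   Delta H = -|A|^2 H - <grad H, grad u>.  Since e_3 is a unit vector, |grad u|^2 = 1 - H^2,
   and in dimension two A^2 = H A - K g, |A|^2 = H^2 - 2K.  Hence
   |grad H|^2 = H A(grad u, grad u) - K (1 - H^2) and
   H Delta H = -H^2 (H^2 - 2K) + H A(grad u, grad u), so that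
   K (1 + H^2) = H Delta H - |grad H|^2 + H^4.
   The stated formulas follow by the chain rule for the Laplacian and Delta u = H^2.
   In the chart each tensor identity reduces to a rational identity between the derivatives
   of the coordinates of f, checked by [field]. *)

Definition is_partial (i : nat) (F : R -> R -> R) (x y l : R) : Prop :=
  match i with
  | O => derivable_pt_lim (fun t => F t y) x l
  | _ => derivable_pt_lim (fun t => F x t) y l
  end.
Definition ex_partial (i : nat) (F : R -> R -> R) (x y : R) : Prop :=
  exists l, is_partial i F x y l.

Lemma is_partial_unique i F x y l : is_partial i F x y l -> Dp i F x y = l.
Proof.
  destruct i; intro HF; simpl; [unfold Defs.Dx | unfold Defs.Dy];
    apply (uniqueness_limite _ _ _ _ (epsilon_spec (inhabits 0) _ (ex_intro _ l HF)) HF).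
Qed.

Lemma Dp_correct i F x y : ex_partial i F x y -> is_partial i F x y (Dp i F x y).
Proof. intros [l HF]. rewrite (is_partial_unique _ _ _ _ _ HF). exact HF. Qed.

Lemma derivable_pt_lim_ext_loc (g h : R -> R) x l :
  locally x (fun t => g t = h t) -> derivable_pt_lim g x l -> derivable_pt_lim h x l.
Proof. intros E Hg. apply is_derive_Reals, (is_derive_ext_loc g), is_derive_Reals; assumption. Qed.

Lemma is_partial_ext_loc i F G x y l :
  locally_2d (fun a b => F a b = G a b) x y -> is_partial i F x y l -> is_partial i G x y l.
Proof.
  intro E. destruct i; apply derivable_pt_lim_ext_loc.
  - exact (locally_2d_1d_const_y _ _ _ E).
  - exact (locally_2d_1d_const_x _ _ _ E).
Qed.

Lemma locally_2d_mono (P Q : R -> R -> Prop) x y :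
  locally_2d P x y -> (forall a b, P a b -> Q a b) -> locally_2d Q x y.
Proof. intros HP HPQ. exact (locally_2d_impl P Q x y (locally_2d_forall _ x y HPQ) HP). Qed.

Lemma locally_2d_sym (F G : R -> R -> R) x y :
  locally_2d (fun a b => F a b = G a b) x y -> locally_2d (fun a b => G a b = F a b) x y.
Proof. intro E. apply (locally_2d_mono _ _ x y E). intros a b. apply eq_sym. Qed.

Lemma Dp_ext_loc i F G x y :
  locally_2d (fun a b => F a b = G a b) x y -> Dp i F x y = Dp i G x y.
Proof.
  intro E. pose proof (locally_2d_sym _ _ _ _ E) as E'.
  destruct i; simpl; [unfold Defs.Dx | unfold Defs.Dy]; f_equal;
    apply functional_extensionality; intro l; apply propositional_extensionality;
    split; [apply (is_partial_ext_loc 0 F G) | apply (is_partial_ext_loc 0 G F)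
           | apply (is_partial_ext_loc 1 F G) | apply (is_partial_ext_loc 1 G F)]; assumption.
Qed.

Lemma is_partial_const i c x y : is_partial i (fun _ _ => c) x y 0.
Proof. destruct i; apply derivable_pt_lim_const. Qed.

Lemma is_partial_plus i F G x y l1 l2 : is_partial i F x y l1 -> is_partial i G x y l2 ->
  is_partial i (fun a b => F a b + G a b) x y (l1 + l2).
Proof. destruct i; apply derivable_pt_lim_plus. Qed.

Lemma is_partial_minus i F G x y l1 l2 : is_partial i F x y l1 -> is_partial i G x y l2 ->
  is_partial i (fun a b => F a b - G a b) x y (l1 - l2).
Proof. destruct i; apply derivable_pt_lim_minus. Qed.

Lemma is_partial_opp i F x y l : is_partial i F x y l ->
  is_partial i (fun a b => - F a b) x y (- l).
Proof. destruct i; apply derivable_pt_lim_opp. Qed.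

Lemma is_partial_mult i F G x y l1 l2 : is_partial i F x y l1 -> is_partial i G x y l2 ->
  is_partial i (fun a b => F a b * G a b) x y (l1 * G x y + F x y * l2).
Proof. destruct i; apply derivable_pt_lim_mult. Qed.

Lemma is_partial_comp i F x y l (phi : R -> R) dphi :
  derivable_pt_lim phi (F x y) dphi -> is_partial i F x y l ->
  is_partial i (fun a b => phi (F a b)) x y (dphi * l).
Proof.
  intros Hphi HF. destruct i.
  - exact (derivable_pt_lim_comp (fun t => F t y) phi x l dphi HF Hphi).
  - exact (derivable_pt_lim_comp (fun t => F x t) phi y l dphi HF Hphi).
Qed.

Lemma derivable_pt_lim_Rinv z : z <> 0 -> derivable_pt_lim Rinv z (- 1 / z ^ 2).
Proof. intro Hz. apply is_derive_Reals. auto_derive; [exact Hz | field; exact Hz]. Qed.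

Lemma is_partial_inv i F x y l : F x y <> 0 -> is_partial i F x y l ->
  is_partial i (fun a b => / F a b) x y (- l / F x y ^ 2).
Proof.
  intros HF H. replace (- l / F x y ^ 2) with (- 1 / F x y ^ 2 * l) by (field; exact HF).
  exact (is_partial_comp i F x y l Rinv _ (derivable_pt_lim_Rinv _ HF) H).
Qed.

Lemma is_partial_div i F G x y l1 l2 : G x y <> 0 ->
  is_partial i F x y l1 -> is_partial i G x y l2 ->
  is_partial i (fun a b => F a b / G a b) x y (l1 * / G x y + F x y * (- l2 / G x y ^ 2)).
Proof. intros HG HF HG'. apply (is_partial_mult i F (fun a b => / G a b)); auto using is_partial_inv. Qed.

Lemma sqrt_div_double X : 0 < X -> sqrt X / (2 * X) = / (2 * sqrt X).
Proof.
  intro HX. assert (0 < sqrt X) by (apply sqrt_lt_R0; auto).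
  rewrite <- (sqrt_sqrt X) at 2 by lra. field. lra.
Qed.

(* Written with [sqrt F] in the numerator so that [field] never needs [sqrt F ^ 2 = F]. *)
Lemma is_partial_sqrt i F x y l : 0 < F x y -> is_partial i F x y l ->
  is_partial i (fun a b => sqrt (F a b)) x y (sqrt (F x y) / (2 * F x y) * l).
Proof. intros. rewrite sqrt_div_double by auto. apply is_partial_comp; auto using derivable_pt_lim_sqrt. Qed.

Lemma is_partial_ln i F x y l : 0 < F x y -> is_partial i F x y l ->
  is_partial i (fun a b => ln (F a b)) x y (/ F x y * l).
Proof. intros. apply is_partial_comp; auto using derivable_pt_lim_ln. Qed.

Lemma open2_locally U x y : open2 U -> U x y -> locally_2d U x y.
Proof. intros HU Hxy. destruct (HU x y Hxy) as [d [Hd E]]. exists (mkposreal d Hd). exact E. Qed.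

Lemma open2_locally_mono U (P : R -> R -> Prop) x y :
  open2 U -> U x y -> (forall a b, U a b -> P a b) -> locally_2d P x y.
Proof. intros HU Hxy. apply locally_2d_mono, (open2_locally U x y HU Hxy). Qed.

Lemma cont2_at_continuity_2d_pt F x y : cont2_at F x y -> continuity_2d_pt F x y.
Proof. intros C eps. destruct (C eps (cond_pos eps)) as [d [Hd E]]. exists (mkposreal d Hd). exact E. Qed.

Lemma iterD_app w i F : iterD (w ++ i :: nil) F = iterD w (Dp i F).
Proof. induction w as [|j w IH]; simpl; [|rewrite IH]; reflexivity. Qed.

Section Smooth.
Variables (U : R -> R -> Prop) (F : R -> R -> R).
Hypothesis HF : smooth_on U F.

Lemma smooth_on_Dp i : smooth_on U (Dp i F).
Proof. intros w x y Hxy. rewrite <- iterD_app. apply HF; auto. Qed.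

Lemma smooth_on_ex_partial i x y : U x y -> ex_partial i F x y.
Proof. intro Hxy. destruct (HF nil x y Hxy) as [_ [Hx Hy]]. destruct i; assumption. Qed.

Lemma smooth_on_continuity_2d_pt x y : U x y -> continuity_2d_pt F x y.
Proof. intro Hxy. apply cont2_at_continuity_2d_pt, (HF nil x y Hxy). Qed.

Lemma smooth_on_is_derive i x y : U x y ->
  is_derive (match i with O => fun t => F t y | _ => fun t => F x t end)
    (match i with O => x | _ => y end) (Dp i F x y).
Proof.
  intro Hxy. apply is_derive_Reals.
  pose proof (Dp_correct i F x y (smooth_on_ex_partial i x y Hxy)). destruct i; assumption.
Qed.

End Smooth.

Lemma smooth_on_continuity_2d_pt_ext U F G w x y : open2 U -> smooth_on U F -> U x y ->
  (forall u v, U u v -> iterD w F u v = G u v) -> continuity_2d_pt G x y.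
Proof.
  intros HU HF Hxy E. apply (continuity_2d_pt_ext_loc (iterD w F)).
  - exact (open2_locally_mono U _ x y HU Hxy E).
  - apply cont2_at_continuity_2d_pt, (HF w x y Hxy).
Qed.

Lemma Dp_comm U F i j x y : open2 U -> smooth_on U F -> U x y ->
  Dp i (Dp j F) x y = Dp j (Dp i F) x y.
Proof.
  intros HU HF Hxy.
  assert (Hmixed : forall u v, U u v ->
    is_derive (fun z => Derive (fun t => F z t) v) u (Dp 0 (Dp 1 F) u v) /\
    is_derive (fun z => Derive (fun t => F t z) u) v (Dp 1 (Dp 0 F) u v)).
  { intros u v Huv. destruct (open2_locally U u v HU Huv) as [d E].
    split; eapply is_derive_ext_loc;
      try exact (smooth_on_is_derive U _ (smooth_on_Dp U F HF _) _ u v Huv); exists d; intros t Ht;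
      symmetry; apply is_derive_unique;
      [apply (smooth_on_is_derive U F HF 1) | apply (smooth_on_is_derive U F HF 0)];
      apply E; try exact Ht; rewrite Rminus_diag, Rabs_R0; apply cond_pos. }
  assert (Hsym : Dp 0 (Dp 1 F) x y = Dp 1 (Dp 0 F) x y).
  { destruct (Hmixed x y Hxy) as [H01 H10].
    rewrite <- (is_derive_unique _ _ _ H01), <- (is_derive_unique _ _ _ H10).
    apply Schwarz.
    - apply (open2_locally_mono U _ x y HU Hxy).
      intros u v Huv. destruct (Hmixed u v Huv) as [D01 D10].
      repeat split; eexists; [exact (smooth_on_is_derive U F HF 0 u v Huv)
        | exact (smooth_on_is_derive U F HF 1 u v Huv) | exact D01 | exact D10].
    - apply (smooth_on_continuity_2d_pt_ext U F _ (0 :: 1 :: nil)%nat x y HU HF Hxy).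
      intros u v Huv. symmetry. apply is_derive_unique, (Hmixed u v Huv).
    - apply (smooth_on_continuity_2d_pt_ext U F _ (1 :: 0 :: nil)%nat x y HU HF Hxy).
      intros u v Huv. symmetry. apply is_derive_unique, (Hmixed u v Huv). }
  destruct i as [|i]; destruct j as [|j]; simpl; auto.
Qed.

Lemma locally_2d_locally_2d P x y :
  locally_2d P x y -> locally_2d (fun a b => locally_2d P a b) x y.
Proof.
  intro HP. apply locally_2d_locally in HP. apply locally_2d_locally.
  refine (filter_imp _ _ _ (locally_locally _ _ HP)). intros [a b]. apply locally_2d_locally.
Qed.

Lemma Dp_plus_loc phi psi j x y :
  locally_2d (fun a b => ex_partial j phi a b /\ ex_partial j psi a b) x y ->
  locally_2d (fun a b => Dp j (fun a b => phi a b + psi a b) a b = Dp j phi a b + Dp j psi a b) x y.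
Proof.
  intro Hloc. apply (locally_2d_mono _ _ x y Hloc). intros a b [Hphi Hpsi].
  apply is_partial_unique, is_partial_plus; apply Dp_correct; assumption.
Qed.

Lemma is_partial_Dp_plus phi psi i j x y :
  locally_2d (fun a b => ex_partial j phi a b /\ ex_partial j psi a b) x y ->
  ex_partial i (Dp j phi) x y -> ex_partial i (Dp j psi) x y ->
  is_partial i (Dp j (fun a b => phi a b + psi a b)) x y (Dp i (Dp j phi) x y + Dp i (Dp j psi) x y).
Proof.
  intros Hloc Hphi Hpsi. apply (is_partial_ext_loc _ (fun a b => Dp j phi a b + Dp j psi a b)).
  - apply locally_2d_sym, Dp_plus_loc, Hloc.
  - apply is_partial_plus; apply Dp_correct; assumption.
Qed.

Lemma Dp_comp_loc (g dg : R -> R) h j x y :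
  locally_2d (fun a b => derivable_pt_lim g (h a b) (dg (h a b)) /\ ex_partial j h a b) x y ->
  locally_2d (fun a b => Dp j (fun a b => g (h a b)) a b = dg (h a b) * Dp j h a b) x y.
Proof.
  intro Hloc. apply (locally_2d_mono _ _ x y Hloc). intros a b [Hg Hh].
  apply is_partial_unique, is_partial_comp; [|apply Dp_correct]; assumption.
Qed.

Lemma is_partial_Dp_comp (g dg : R -> R) d2g h i j x y :
  locally_2d (fun a b => derivable_pt_lim g (h a b) (dg (h a b)) /\ ex_partial j h a b) x y ->
  derivable_pt_lim dg (h x y) d2g -> ex_partial i h x y -> ex_partial i (Dp j h) x y ->
  is_partial i (Dp j (fun a b => g (h a b))) x y
    (d2g * Dp i h x y * Dp j h x y + dg (h x y) * Dp i (Dp j h) x y).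
Proof.
  intros Hloc Hdg Hh Hhj. apply (is_partial_ext_loc _ (fun a b => dg (h a b) * Dp j h a b)).
  - apply locally_2d_sym, Dp_comp_loc, Hloc.
  - apply is_partial_mult; [apply is_partial_comp|]; try apply Dp_correct; assumption.
Qed.

Lemma continuity_2d_pt_pos_loc g x y :
  continuity_2d_pt g x y -> 0 < g x y -> locally_2d (fun a b => 0 < g a b) x y.
Proof.
  intros Hg Hpos. apply (locally_2d_mono _ _ x y (Hg (mkposreal _ Hpos))).
  intros a b Hab. apply Rabs_def2 in Hab. simpl in Hab. lra.
Qed.

Lemma derivable_pt_lim_ln_sqrt_1_plus_sq t :
  derivable_pt_lim (fun t => ln (sqrt (1 + t ^ 2))) t (t / (1 + t ^ 2)).
Proof.
  assert (Hs : 0 < sqrt (1 + t * (t * 1))) by (apply sqrt_lt_R0; nra).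
  apply is_derive_Reals. auto_derive.
  - repeat split; [nra | exact Hs].
  - replace (1 + t ^ 2) with (sqrt (1 + t * (t * 1)) * sqrt (1 + t * (t * 1)))
      by (rewrite sqrt_sqrt; [ring | nra]).
    field. lra.
Qed.

Lemma derivable_pt_lim_div_1_plus_sq t :
  derivable_pt_lim (fun t => t / (1 + t ^ 2)) t ((1 - t ^ 2) / (1 + t ^ 2) ^ 2).
Proof. apply is_derive_Reals. auto_derive; [nra | field; nra]. Qed.

Create HintDb partial discriminated.
#[local] Hint Extern 1 (lt _ _) => lia : partial.

Ltac solve_is_partial := lazymatch goal with
 | |- is_partial _ (fun a b => @?F a b - @?G a b) _ _ _ => eapply (is_partial_minus _ F G); solve_is_partial
 | |- is_partial _ (fun a b => @?F a b + @?G a b) _ _ _ => eapply (is_partial_plus _ F G); solve_is_partial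
 | |- is_partial _ (fun a b => - @?F a b) _ _ _ => eapply (is_partial_opp _ F); solve_is_partial
 | |- is_partial _ (fun a b => @?F a b * @?G a b) _ _ _ => eapply (is_partial_mult _ F G); solve_is_partial
 | |- is_partial _ (fun a b => @?F a b / @?G a b) _ _ _ =>
     eapply (is_partial_div _ F G); [ | solve_is_partial | solve_is_partial]
 | |- is_partial _ (fun a b => sqrt (@?F a b)) _ _ _ => eapply (is_partial_sqrt _ F); [ | solve_is_partial]
 | |- is_partial _ (fun a b => ?F a b) _ _ _ => apply (Dp_correct _ F); solve [eauto with partial]
 | |- is_partial _ ?F _ _ _ =>
     first [ apply is_partial_const | apply (Dp_correct _ F); solve [eauto with partial] ]
 end.

Ltac side_condition := cbv beta;
  first [ assumption | apply Rgt_not_eq; assumption | apply Rlt_not_eq; assumption | lra ].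

Ltac eval_Dp := repeat match goal with |- context [Dp ?i (fun a b => @?E a b) ?x ?y] =>
  erewrite (is_partial_unique i (fun a b => E a b) x y) by (solve_is_partial; side_condition) end.

Section Chart.
Variables (U : R -> R -> Prop) (f : Surf).
Hypotheses (HU : open2 U) (Hsmooth : forall k, (k < 3)%nat -> smooth_on U (f k))
  (Himm : immersion_on U f).

Lemma ex_partial_coord i c x y : (c < 3)%nat -> U x y -> ex_partial i (f c) x y.
Proof. intros Hc Hxy. exact (smooth_on_ex_partial U _ (Hsmooth c Hc) i x y Hxy). Qed.
Lemma ex_partial_coord1 i j c x y : (c < 3)%nat -> U x y -> ex_partial i (Dp j (f c)) x y.
Proof. intros Hc Hxy. exact (smooth_on_ex_partial U _ (smooth_on_Dp U _ (Hsmooth c Hc) j) i x y Hxy). Qed.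
Lemma ex_partial_coord2 i j k c x y : (c < 3)%nat -> U x y -> ex_partial i (Dp j (Dp k (f c))) x y.
Proof.
  intros Hc Hxy.
  exact (smooth_on_ex_partial U _ (smooth_on_Dp U _ (smooth_on_Dp U _ (Hsmooth c Hc) k) j) i x y Hxy).
Qed.
#[local] Hint Resolve ex_partial_coord ex_partial_coord1 ex_partial_coord2 : partial.

Lemma Dp_coord_comm i j c x y : (c < 3)%nat -> U x y ->
  Dp i (Dp j (f c)) x y = Dp j (Dp i (f c)) x y.
Proof. intros Hc Hxy. exact (Dp_comm U _ i j x y HU (Hsmooth c Hc) Hxy). Qed.

Lemma Dp3_coord_comm_out i j k c x y : (c < 3)%nat -> U x y ->
  Dp i (Dp j (Dp k (f c))) x y = Dp j (Dp i (Dp k (f c))) x y.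
Proof. intros Hc Hxy. exact (Dp_comm U _ i j x y HU (smooth_on_Dp U _ (Hsmooth c Hc) k) Hxy). Qed.

Lemma Dp3_coord_comm_in i j k c x y : (c < 3)%nat -> U x y ->
  Dp i (Dp j (Dp k (f c))) x y = Dp i (Dp k (Dp j (f c))) x y.
Proof.
  intros Hc Hxy. apply Dp_ext_loc.
  apply (open2_locally_mono U _ x y HU Hxy).
  intros a b Hab. exact (Dp_coord_comm j k c a b Hc Hab).
Qed.

Lemma metric_sym i j : metric f i j = metric f j i.
Proof. do 2 (apply functional_extensionality; intro). unfold metric, dot3; ring. Qed.

Lemma detg_cross x y :
  detg f x y = dot3 (cross3 (vat (fd 0 f) x y) (vat (fd 1 f) x y)) (cross3 (vat (fd 0 f) x y) (vat (fd 1 f) x y)).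
Proof. unfold detg, metric, dot3, cross3, vat, fd. ring. Qed.

Lemma detg_pos x y : U x y -> 0 < detg f x y.
Proof.
  intro Hxy. pose proof (Himm x y Hxy) as Hn. rewrite <- detg_cross in Hn.
  enough (0 <= detg f x y) by lra.
  rewrite detg_cross. unfold dot3. set (c := cross3 _ _).
  pose proof (Rle_0_sqr (c 0%nat)). pose proof (Rle_0_sqr (c 1%nat)). pose proof (Rle_0_sqr (c 2%nat)).
  unfold Rsqr in *. lra.
Qed.

Definition christ_low (m i j : nat) (a b : R) : R := dot3 (vat (fdd i j f) a b) (vat (fd m f) a b).

Lemma christ_low_sym m x y : U x y -> christ_low m 1 0 x y = christ_low m 0 1 x y.
Proof. intro Hxy. unfold christ_low, dot3, vat, fdd. rewrite !(Dp_coord_comm 1 0) by (auto; lia). reflexivity. Qed.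

Lemma Dp_metric i j k x y : U x y ->
  Dp k (metric f i j) x y = christ_low j k i x y + christ_low i k j x y.
Proof. intro Hxy. unfold metric, dot3, vat, fd. eval_Dp. unfold christ_low, dot3, vat, fd, fdd. ring. Qed.

Lemma ex_partial_metric k i j x y : U x y -> ex_partial k (metric f i j) x y.
Proof. intro Hxy. eexists. unfold metric, dot3, vat, fd. solve_is_partial. Qed.

Lemma Dp_metric_loc i j k x y : U x y ->
  locally_2d (fun a b => Dp k (metric f i j) a b = christ_low j k i a b + christ_low i k j a b) x y.
Proof.
  intro Hxy. apply (open2_locally_mono U _ x y HU Hxy).
  intros a b; apply Dp_metric.
Qed.

Lemma ex_partial_Dp_metric l k i j x y : U x y -> ex_partial l (Dp k (metric f i j)) x y.
Proof.
  intro Hxy. eexists. eapply is_partial_ext_loc.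
  - apply locally_2d_sym, Dp_metric_loc, Hxy.
  - unfold christ_low, dot3, vat, fd, fdd. solve_is_partial.
Qed.
#[local] Hint Resolve ex_partial_metric ex_partial_Dp_metric : partial.

Lemma laplacian_christoffel phi x y : U x y -> (forall i j, ex_partial i (Dp j phi) x y) ->
  laplacian f phi x y = sum2 (fun i => sum2 (fun j => ginv f i j x y *
     (Dp i (Dp j phi) x y - sum2 (fun k => christ f k i j x y * Dp k phi x y)))).
Proof.
  intros Hxy Hphi. pose proof (detg_pos x y Hxy) as Hd.
  assert (Hs : 0 < sqrt (detg f x y)) by (apply sqrt_lt_R0; auto).
  unfold laplacian, christ, sum2, ginv. cbv beta iota. unfold detg in *.
  eval_Dp.
  rewrite !(Dp_metric _ _ _ x y Hxy), !(metric_sym 1 0) in *. rewrite !(christ_low_sym _ x y Hxy).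
  field. split; lra.
Qed.

Definition third_tan (i j k m : nat) (a b : R) : R :=
  dot3 (fun c => Dp i (Dp j (Dp k (f c))) a b) (vat (fd m f) a b).
Definition hess_dot (i j k l : nat) (a b : R) : R :=
  dot3 (vat (fdd i j f) a b) (vat (fdd k l f) a b).

Lemma Dp3_coord_yxx c x y : (c < 3)%nat -> U x y ->
  Dp 1 (Dp 0 (Dp 0 (f c))) x y = Dp 0 (Dp 0 (Dp 1 (f c))) x y.
Proof. intros. rewrite Dp3_coord_comm_out, Dp3_coord_comm_in; auto. Qed.
Lemma Dp3_coord_xyx c x y : (c < 3)%nat -> U x y ->
  Dp 0 (Dp 1 (Dp 0 (f c))) x y = Dp 0 (Dp 0 (Dp 1 (f c))) x y.
Proof. intros. apply Dp3_coord_comm_in; auto. Qed.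
Lemma Dp3_coord_yyx c x y : (c < 3)%nat -> U x y ->
  Dp 1 (Dp 1 (Dp 0 (f c))) x y = Dp 0 (Dp 1 (Dp 1 (f c))) x y.
Proof. intros. rewrite Dp3_coord_comm_in, Dp3_coord_comm_out; auto. Qed.
Lemma Dp3_coord_yxy c x y : (c < 3)%nat -> U x y ->
  Dp 1 (Dp 0 (Dp 1 (f c))) x y = Dp 0 (Dp 1 (Dp 1 (f c))) x y.
Proof. intros. apply Dp3_coord_comm_out; auto. Qed.

Ltac sort_Dp3 := unfold dot3;
  rewrite ?Dp3_coord_yxx, ?Dp3_coord_xyx, ?Dp3_coord_yyx, ?Dp3_coord_yxy by (first [assumption | lia]).

Lemma third_tan_yxx m x y : U x y -> third_tan 1 0 0 m x y = third_tan 0 0 1 m x y.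
Proof. intro; unfold third_tan; sort_Dp3; reflexivity. Qed.
Lemma third_tan_xyx m x y : U x y -> third_tan 0 1 0 m x y = third_tan 0 0 1 m x y.
Proof. intro; unfold third_tan; sort_Dp3; reflexivity. Qed.
Lemma third_tan_yyx m x y : U x y -> third_tan 1 1 0 m x y = third_tan 0 1 1 m x y.
Proof. intro; unfold third_tan; sort_Dp3; reflexivity. Qed.
Lemma third_tan_yxy m x y : U x y -> third_tan 1 0 1 m x y = third_tan 0 1 1 m x y.
Proof. intro; unfold third_tan; sort_Dp3; reflexivity. Qed.

Lemma Dp2_metric i j k l x y : U x y ->
  Dp k (Dp l (metric f i j)) x y =
  third_tan k l i j x y + hess_dot l i k j x y + third_tan k l j i x y + hess_dot l j k i x y.
Proof.
  intro Hxy. rewrite (Dp_ext_loc k _ (fun a b => christ_low j l i a b + christ_low i l j a b)) by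
    exact (Dp_metric_loc i j l x y Hxy).
  unfold christ_low, dot3, vat, fd, fdd. eval_Dp. unfold third_tan, hess_dot, dot3, vat, fd, fdd. ring.
Qed.

Lemma laplacian_ext_loc phi psi x y :
  locally_2d (fun a b => phi a b = psi a b) x y -> laplacian f phi x y = laplacian f psi x y.
Proof.
  intro E.
  assert (Hterm : forall i j, Dp i (fun a b => sqrt (detg f a b) * ginv f i j a b * Dp j phi a b) x y =
                             Dp i (fun a b => sqrt (detg f a b) * ginv f i j a b * Dp j psi a b) x y).
  { intros i j. apply Dp_ext_loc.
    apply (locally_2d_mono _ _ x y (locally_2d_locally_2d _ x y E)).
    intros a b Eab. rewrite (Dp_ext_loc j phi psi a b Eab). reflexivity. }
  unfold laplacian, sum2. rewrite !Hterm. reflexivity.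
Qed.

Lemma laplacian_plus phi psi x y : U x y ->
  locally_2d (fun a b => forall j, ex_partial j phi a b /\ ex_partial j psi a b) x y ->
  (forall i j, ex_partial i (Dp j phi) x y) -> (forall i j, ex_partial i (Dp j psi) x y) ->
  laplacian f (fun a b => phi a b + psi a b) x y = laplacian f phi x y + laplacian f psi x y.
Proof.
  intros Hxy Hloc Hphi Hpsi.
  assert (Hloc_j : forall j, locally_2d (fun a b => ex_partial j phi a b /\ ex_partial j psi a b) x y).
  { intro j. apply (locally_2d_mono _ _ x y Hloc). intros a b H; apply H. }
  assert (HD2 : forall i j, is_partial i (Dp j (fun a b => phi a b + psi a b)) x y
                  (Dp i (Dp j phi) x y + Dp i (Dp j psi) x y))
    by (intros; apply is_partial_Dp_plus; auto).
  assert (HD1 : forall j, Dp j (fun a b => phi a b + psi a b) x y = Dp j phi x y + Dp j psi x y)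
    by (intro j; exact (locally_2d_singleton _ _ _ (Dp_plus_loc phi psi j x y (Hloc_j j)))).
  rewrite !laplacian_christoffel by (auto; intros; eexists; apply HD2).
  unfold sum2. rewrite !HD1, !(is_partial_unique _ _ _ _ _ (HD2 _ _)). ring.
Qed.

Lemma laplacian_comp (g dg : R -> R) d2g h x y : U x y ->
  locally_2d (fun a b => derivable_pt_lim g (h a b) (dg (h a b)) /\ forall j, ex_partial j h a b) x y ->
  derivable_pt_lim dg (h x y) d2g -> (forall i j, ex_partial i (Dp j h) x y) ->
  laplacian f (fun a b => g (h a b)) x y = dg (h x y) * laplacian f h x y + d2g * gradsq f h x y.
Proof.
  intros Hxy Hloc Hdg Hh2.
  assert (Hloc_j : forall j, locally_2d
      (fun a b => derivable_pt_lim g (h a b) (dg (h a b)) /\ ex_partial j h a b) x y).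
  { intro j. apply (locally_2d_mono _ _ x y Hloc).
    intros a b [Hg Hh]; split; auto. }
  assert (Hh1 : forall i, ex_partial i h x y) by apply (locally_2d_singleton _ _ _ Hloc).
  assert (HD2 : forall i j, is_partial i (Dp j (fun a b => g (h a b))) x y
                  (d2g * Dp i h x y * Dp j h x y + dg (h x y) * Dp i (Dp j h) x y))
    by (intros; apply is_partial_Dp_comp; auto).
  assert (HD1 : forall j, Dp j (fun a b => g (h a b)) x y = dg (h x y) * Dp j h x y)
    by (intro j; exact (locally_2d_singleton _ _ _ (Dp_comp_loc g dg h j x y (Hloc_j j)))).
  rewrite !laplacian_christoffel by (auto; intros; eexists; apply HD2).
  unfold gradsq, sum2. rewrite !HD1, !(is_partial_unique _ _ _ _ _ (HD2 _ _)). ring.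
Qed.

Section Normal.
Variable sigma : R.
Hypothesis sigma_sq : sigma * sigma = 1.

(* By the Weingarten equation this is the derivative d_i xi_m of the normal. *)
Definition weingarten (i m : nat) (a b : R) : R :=
  sum2 (fun k => sum2 (fun l => ginv f k l a b * sff sigma f i k a b * Dp l (f m) a b)).

Lemma Dp_normal i m x y : (m < 3)%nat -> U x y ->
  Dp i (fun a b => normal sigma f a b m) x y = weingarten i m x y.
Proof.
  intros Hm Hxy. pose proof (detg_pos x y Hxy) as Hd.
  assert (Hs : 0 < sqrt (detg f x y)) by (apply sqrt_lt_R0; auto).
  unfold weingarten, sff, ginv, sum2. cbv beta iota. rewrite !detg_cross in *.
  unfold normal in *. unfold metric, dot3, cross3, vat, fd, fdd in *.
  destruct m as [|[|[|m]]]; [| | |lia]; cbv beta iota;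
  eval_Dp; rewrite pow2_sqrt, sqrt_div_double by lra; field; split; lra.
Qed.

Lemma ex_partial_normal i m x y : U x y -> ex_partial i (fun a b => normal sigma f a b m) x y.
Proof.
  intro Hxy. pose proof (detg_pos x y Hxy) as Hd.
  assert (Hs : 0 < sqrt (detg f x y)) by (apply sqrt_lt_R0; auto).
  rewrite !detg_cross in *. unfold normal. unfold dot3, cross3, vat, fd in *.
  destruct m as [|[|m]]; cbv beta iota; eexists; solve_is_partial; side_condition.
Qed.
#[local] Hint Resolve ex_partial_normal : partial.

Lemma ex_partial_sff i j k x y : U x y -> ex_partial i (sff sigma f j k) x y.
Proof. intro Hxy. eexists. unfold sff, dot3, vat, fdd. solve_is_partial. Qed.
#[local] Hint Resolve ex_partial_sff : partial.

Lemma sff_sym x y : U x y -> sff sigma f 1 0 x y = sff sigma f 0 1 x y.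
Proof. intro Hxy. unfold sff, dot3, vat, fdd. rewrite !(Dp_coord_comm 1 0) by (auto; lia). reflexivity. Qed.

Definition third_nor (i j k : nat) (a b : R) : R :=
  dot3 (fun c => Dp i (Dp j (Dp k (f c))) a b) (normal sigma f a b).

Lemma third_nor_yxx x y : U x y -> third_nor 1 0 0 x y = third_nor 0 0 1 x y.
Proof. intro; unfold third_nor; sort_Dp3; reflexivity. Qed.
Lemma third_nor_xyx x y : U x y -> third_nor 0 1 0 x y = third_nor 0 0 1 x y.
Proof. intro; unfold third_nor; sort_Dp3; reflexivity. Qed.
Lemma third_nor_yyx x y : U x y -> third_nor 1 1 0 x y = third_nor 0 1 1 x y.
Proof. intro; unfold third_nor; sort_Dp3; reflexivity. Qed.
Lemma third_nor_yxy x y : U x y -> third_nor 1 0 1 x y = third_nor 0 1 1 x y.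
Proof. intro; unfold third_nor; sort_Dp3; reflexivity. Qed.

Lemma Dp_sff i j k x y : U x y ->
  Dp i (sff sigma f j k) x y = - (third_nor i j k x y +
    sum2 (fun r => sum2 (fun s => ginv f r s x y * sff sigma f i r x y * christ_low s j k x y))).
Proof.
  intro Hxy.
  change (sff sigma f j k) with (fun a b => - dot3 (vat (fdd j k f) a b) (normal sigma f a b)).
  unfold dot3 at 1, vat, fdd. eval_Dp.
  rewrite !(Dp_normal i _ x y) by (auto; lia).
  unfold weingarten, third_nor, christ_low, sum2, dot3, vat, fdd, fd. ring.
Qed.

Lemma dot_normal_mul x y v w : U x y ->
  dot3 v (normal sigma f x y) * dot3 w (normal sigma f x y) =
  dot3 v (cross3 (vat (fd 0 f) x y) (vat (fd 1 f) x y)) *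
  dot3 w (cross3 (vat (fd 0 f) x y) (vat (fd 1 f) x y)) / detg f x y.
Proof.
  intro Hxy. pose proof (detg_pos x y Hxy) as Hd.
  assert (Hs : 0 < sqrt (detg f x y)) by (apply sqrt_lt_R0; auto).
  rewrite detg_cross in *. unfold normal. set (c := cross3 _ _) in *. set (N := dot3 c c) in *.
  transitivity (sigma * sigma * (dot3 v c * dot3 w c) / (sqrt N * sqrt N)).
  - unfold dot3. field. lra.
  - rewrite sigma_sq, sqrt_sqrt by lra. field. lra.
Qed.

Lemma dot3_frame x y (v w : nat -> R) : U x y ->
  dot3 v w = dot3 v (normal sigma f x y) * dot3 w (normal sigma f x y) +
    sum2 (fun r => sum2 (fun s => ginv f r s x y * dot3 v (vat (fd r f) x y) * dot3 w (vat (fd s f) x y))).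
Proof.
  intro Hxy. pose proof (detg_pos x y Hxy) as Hd.
  rewrite (dot_normal_mul x y v w Hxy). unfold sum2, ginv. rewrite detg_cross in *.
  unfold metric, dot3, cross3, vat, fd in *. field. lra.
Qed.

Lemma hess_dot_frame i j k l x y : U x y ->
  hess_dot i j k l x y = sff sigma f i j x y * sff sigma f k l x y +
    sum2 (fun r => sum2 (fun s => ginv f r s x y * christ_low r i j x y * christ_low s k l x y)).
Proof. intro Hxy. unfold hess_dot. rewrite (dot3_frame x y); auto. unfold sff, christ_low. ring. Qed.

Lemma gaussK_sff x y : U x y ->
  gaussK f x y = (sff sigma f 0 0 x y * sff sigma f 1 1 x y - sff sigma f 0 1 x y ^ 2) / detg f x y.
Proof.
  intro Hxy. pose proof (detg_pos x y Hxy) as Hd.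
  unfold gaussK, Riem, christ, sum2, ginv. cbv beta iota. unfold detg in *.
  rewrite !(metric_sym 1 0) in *.
  eval_Dp.
  rewrite !(Dp2_metric _ _ _ _ x y Hxy), !(Dp_metric _ _ _ x y Hxy), !(hess_dot_frame _ _ _ _ x y Hxy).
  unfold sum2, ginv, detg. rewrite !(metric_sym 1 0).
  rewrite ?(third_tan_yxx _ x y Hxy), ?(third_tan_xyx _ x y Hxy), ?(third_tan_yyx _ x y Hxy),
    ?(third_tan_yxy _ x y Hxy), ?(christ_low_sym _ x y Hxy), ?(sff_sym x y Hxy).
  field. lra.
Qed.

Definition e3 : nat -> R := fun c => match c with 2%nat => 1 | _ => 0 end.

Lemma Dp2_height i l x y : U x y ->
  Dp i (Dp l (f 2%nat)) x y = - sff sigma f i l x y * normal sigma f x y 2%nat +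
    sum2 (fun r => sum2 (fun s => ginv f r s x y * christ_low r i l x y * Dp s (f 2%nat) x y)).
Proof.
  intro Hxy. transitivity (dot3 (vat (fdd i l f) x y) e3); [unfold dot3, e3, vat, fdd; ring|].
  rewrite (dot3_frame x y); auto. unfold sff, christ_low, dot3, e3, vat, fd, sum2. ring.
Qed.

Lemma normal_height_sq_add_gradsq x y : U x y ->
  normal sigma f x y 2%nat ^ 2 + gradsq f (f 2%nat) x y = 1.
Proof.
  intro Hxy. transitivity (dot3 e3 e3); [|unfold dot3, e3; ring].
  rewrite (dot3_frame x y e3 e3); auto. unfold gradsq, dot3, e3, vat, fd, sum2. ring.
Qed.

Definition sff_normsq (x y : R) : R := sum2 (fun i => sum2 (fun j => sum2 (fun k => sum2 (fun l =>
   ginv f i k x y * ginv f j l x y * sff sigma f i j x y * sff sigma f k l x y)))).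

(* div (A grad u) = -|A|^2 xi_3 + <grad H, grad u>, by Codazzi and Hess u = -xi_3 A. *)
Lemma div_weingarten_height x y : U x y ->
  sum2 (fun i => sum2 (fun j => ginv f i j x y *
     (Dp i (weingarten j 2) x y - sum2 (fun k => christ f k i j x y * weingarten k 2 x y))))
  = - sff_normsq x y * normal sigma f x y 2%nat +
    sum2 (fun i => sum2 (fun j => ginv f i j x y * Dp i (meanH sigma f) x y * Dp j (f 2%nat) x y)).
Proof.
  intro Hxy. pose proof (detg_pos x y Hxy) as Hd.
  unfold weingarten, meanH, sff_normsq, christ, sum2, ginv. cbv beta iota. unfold detg in *.
  rewrite !(metric_sym 1 0) in *.
  eval_Dp.
  rewrite !(Dp_metric _ _ _ x y Hxy), !(Dp_sff _ _ _ x y Hxy), !(Dp2_height _ _ x y Hxy).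
  unfold sum2, ginv, detg. rewrite !(metric_sym 1 0).
  rewrite ?(third_nor_yxx x y Hxy), ?(third_nor_xyx x y Hxy), ?(third_nor_yyx x y Hxy),
    ?(third_nor_yxy x y Hxy), ?(christ_low_sym _ x y Hxy), ?(sff_sym x y Hxy).
  field. lra.
Qed.

Lemma ex_partial_weingarten i j m x y : (m < 3)%nat -> U x y -> ex_partial i (weingarten j m) x y.
Proof.
  intros Hm Hxy. pose proof (detg_pos x y Hxy) as Hd.
  unfold weingarten, sum2, ginv. unfold detg in *. eexists. solve_is_partial; side_condition.
Qed.
#[local] Hint Resolve ex_partial_weingarten : partial.

Lemma laplacian_height x y : U x y ->
  laplacian f (f 2%nat) x y = - meanH sigma f x y * normal sigma f x y 2%nat.
Proof.
  intro Hxy. pose proof (detg_pos x y Hxy) as Hd.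
  rewrite laplacian_christoffel by (auto with partial).
  unfold sum2. rewrite !(Dp2_height _ _ x y Hxy).
  unfold meanH, christ, sum2, ginv. cbv beta iota.
  rewrite !(Dp_metric _ _ _ x y Hxy). unfold detg in *. rewrite !(metric_sym 1 0) in *.
  rewrite ?(christ_low_sym _ x y Hxy), ?(sff_sym x y Hxy).
  field. lra.
Qed.

Hypothesis Hsol : translating_soliton U sigma f.

Lemma is_partial_meanH i x y : U x y -> is_partial i (meanH sigma f) x y (- weingarten i 2 x y).
Proof.
  intro Hxy. apply (is_partial_ext_loc i (fun a b => - normal sigma f a b 2%nat)).
  - apply (open2_locally_mono U _ x y HU Hxy).
    intros a b Hab. symmetry. exact (Hsol a b Hab).
  - rewrite <- (Dp_normal i 2 x y) by (auto; lia). apply is_partial_opp, Dp_correct. auto with partial.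
Qed.

Lemma ex_partial_meanH i x y : U x y -> ex_partial i (meanH sigma f) x y.
Proof. intro Hxy. eexists. exact (is_partial_meanH i x y Hxy). Qed.

Lemma Dp_meanH i x y : U x y -> Dp i (meanH sigma f) x y = - weingarten i 2 x y.
Proof. intro Hxy. exact (is_partial_unique _ _ _ _ _ (is_partial_meanH i x y Hxy)). Qed.

Lemma is_partial_Dp_meanH i j x y : U x y ->
  is_partial i (Dp j (meanH sigma f)) x y (- Dp i (weingarten j 2) x y).
Proof.
  intro Hxy. apply (is_partial_ext_loc i (fun a b => - weingarten j 2 a b)).
  - apply (open2_locally_mono U _ x y HU Hxy).
    intros a b Hab. symmetry. exact (Dp_meanH j a b Hab).
  - apply is_partial_opp, Dp_correct. auto with partial.
Qed.

Lemma ex_partial_Dp_meanH i j x y : U x y -> ex_partial i (Dp j (meanH sigma f)) x y.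
Proof. intro Hxy. eexists. exact (is_partial_Dp_meanH i j x y Hxy). Qed.

Lemma laplacian_meanH x y : U x y ->
  laplacian f (meanH sigma f) x y = sff_normsq x y * normal sigma f x y 2%nat +
    sum2 (fun i => sum2 (fun j => ginv f i j x y * weingarten i 2 x y * Dp j (f 2%nat) x y)).
Proof.
  intro Hxy. pose proof (div_weingarten_height x y Hxy) as Hcod.
  rewrite laplacian_christoffel by (auto using ex_partial_Dp_meanH).
  unfold sum2 in *.
  rewrite !(is_partial_unique _ _ _ _ _ (is_partial_Dp_meanH _ _ x y Hxy)), !(Dp_meanH _ x y Hxy).
  rewrite !(Dp_meanH _ x y Hxy) in Hcod. lra.
Qed.

Lemma gradsq_meanH x y : U x y ->
  gradsq f (meanH sigma f) x y =
    sum2 (fun i => sum2 (fun j => ginv f i j x y * weingarten i 2 x y * weingarten j 2 x y)).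
Proof. intro Hxy. unfold gradsq, sum2. rewrite !(Dp_meanH _ x y Hxy). ring. Qed.

Lemma gaussK_soliton x y : U x y ->
  gaussK f x y * (1 + meanH sigma f x y ^ 2) =
  meanH sigma f x y * laplacian f (meanH sigma f) x y - gradsq f (meanH sigma f) x y
   + meanH sigma f x y ^ 4.
Proof.
  intro Hxy. pose proof (detg_pos x y Hxy) as Hd.
  pose proof (normal_height_sq_add_gradsq x y Hxy) as He3.
  assert (Hxi : normal sigma f x y 2%nat = - meanH sigma f x y) by (rewrite Hsol; auto; ring).
  rewrite (gaussK_sff x y Hxy), (laplacian_meanH x y Hxy), (gradsq_meanH x y Hxy).
  rewrite Hxi in *. rewrite <- He3 at 1.
  unfold gradsq, weingarten, sff_normsq, meanH, sum2, ginv. unfold detg in *.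
  rewrite !(metric_sym 1 0) in *. rewrite ?(sff_sym x y Hxy).
  field. lra.
Qed.

Lemma meanH_pos_loc x y : U x y -> 0 < meanH sigma f x y ->
  locally_2d (fun a b => U a b /\ 0 < meanH sigma f a b) x y.
Proof.
  intros Hxy HH.
  set (g := fun a b => - sigma * cross3 (vat (fd 0 f) a b) (vat (fd 1 f) a b) 2%nat).
  assert (Hg : forall a b, U a b -> meanH sigma f a b = g a b / sqrt (detg f a b)).
  { intros a b Hab. pose proof (detg_pos a b Hab) as Hd.
    assert (Hs : 0 < sqrt (detg f a b)) by (apply sqrt_lt_R0; auto).
    rewrite Hsol by auto. rewrite detg_cross in *. unfold normal, g. field. lra. }
  assert (Hs : 0 < sqrt (detg f x y)) by (apply sqrt_lt_R0, detg_pos; auto).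
  assert (Hgxy : 0 < g x y).
  { replace (g x y) with (meanH sigma f x y * sqrt (detg f x y)) by (rewrite Hg by auto; field; lra).
    apply Rmult_lt_0_compat; auto. }
  assert (Hcont : continuity_2d_pt g x y).
  { assert (Hcoord : forall i c, (c < 3)%nat -> continuity_2d_pt (Dp i (f c)) x y)
      by (intros i c Hc; exact (smooth_on_continuity_2d_pt U _ (smooth_on_Dp U _ (Hsmooth c Hc) i) x y Hxy)).
    unfold g, cross3, vat, fd.
    apply continuity_2d_pt_mult; [apply continuity_2d_pt_const|].
    apply continuity_2d_pt_minus; apply continuity_2d_pt_mult; apply Hcoord; lia. }
  apply (locally_2d_mono _ _ x y
    (locally_2d_and _ _ _ _ (open2_locally U x y HU Hxy) (continuity_2d_pt_pos_loc g x y Hcont Hgxy))).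
  intros a b [Hab Hga]. split; auto. rewrite Hg by auto.
  apply Rdiv_lt_0_compat; auto. apply sqrt_lt_R0, detg_pos; auto.
Qed.

Lemma laplacian_ln_sqrt_meanH x y : U x y ->
  laplacian f (fun a b => ln (sqrt (1 + meanH sigma f a b ^ 2))) x y =
  meanH sigma f x y / (1 + meanH sigma f x y ^ 2) * laplacian f (meanH sigma f) x y +
  (1 - meanH sigma f x y ^ 2) / (1 + meanH sigma f x y ^ 2) ^ 2 * gradsq f (meanH sigma f) x y.
Proof.
  intro Hxy.
  apply (laplacian_comp (fun t => ln (sqrt (1 + t ^ 2))) (fun t => t / (1 + t ^ 2))); auto using ex_partial_Dp_meanH.
  - apply (open2_locally_mono U _ x y HU Hxy).
    intros a b Hab. split; [|auto using ex_partial_meanH].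
    apply derivable_pt_lim_ln_sqrt_1_plus_sq.
  - apply derivable_pt_lim_div_1_plus_sq.
Qed.

Lemma laplacian_ln_meanH x y : U x y -> 0 < meanH sigma f x y ->
  laplacian f (fun a b => ln (meanH sigma f a b)) x y =
  laplacian f (meanH sigma f) x y / meanH sigma f x y - gradsq f (meanH sigma f) x y / meanH sigma f x y ^ 2.
Proof.
  intros Hxy HH.
  rewrite (laplacian_comp ln Rinv (- 1 / meanH sigma f x y ^ 2)); auto using ex_partial_Dp_meanH.
  - field. lra.
  - apply (locally_2d_mono _ _ x y (meanH_pos_loc x y Hxy HH)).
    intros a b [Hab Hpos]. auto using derivable_pt_lim_ln, ex_partial_meanH.
  - apply derivable_pt_lim_Rinv. lra.
Qed.

Lemma laplacian_ln_exp_height_meanH x y : U x y -> 0 < meanH sigma f x y ->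
  laplacian f (fun a b => ln (exp (f 2%nat a b) * meanH sigma f a b)) x y =
  laplacian f (f 2%nat) x y + laplacian f (fun a b => ln (meanH sigma f a b)) x y.
Proof.
  intros Hxy HH. pose proof (meanH_pos_loc x y Hxy HH) as Hloc.
  rewrite (laplacian_ext_loc _ (fun a b => f 2%nat a b + ln (meanH sigma f a b))).
  2:{ apply (locally_2d_mono _ _ x y Hloc).
      intros a b [_ Hpos]. rewrite ln_mult, ln_exp by auto using exp_pos. reflexivity. }
  apply laplacian_plus; auto with partial.
  - apply (locally_2d_mono _ _ x y Hloc).
    intros a b [Hab Hpos] j. split; auto with partial.
    eexists. apply is_partial_ln; auto. apply Dp_correct, ex_partial_meanH; auto.
  - intros i j. eexists. apply (is_partial_Dp_comp ln Rinv (- 1 / meanH sigma f x y ^ 2));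
      auto using ex_partial_meanH, ex_partial_Dp_meanH.
    + apply (locally_2d_mono _ _ x y Hloc).
      intros a b [Hab Hpos]. auto using derivable_pt_lim_ln, ex_partial_meanH.
    + apply derivable_pt_lim_Rinv. lra.
Qed.

End Normal.
End Chart.

Theorem lemma4p5 (U : R -> R -> Prop) (f : Surf) (sigma : R) :
  open2 U ->
  (forall k, (k < 3)%nat -> smooth_on U (f k)) ->
  immersion_on U f ->
  (sigma = 1 \/ sigma = -1) ->
  translating_soliton U sigma f ->
  forall x y, U x y ->
  let H := meanH sigma f in
  let K := gaussK f x y in
  let u := f 2%nat in
  K = laplacian f (fun a b => ln (sqrt (1 + H a b ^ 2))) x y
      - 2 / (1 + H x y ^ 2) ^ 2 * gradsq f H x y
      + H x y ^ 4 / (1 + H x y ^ 2) /\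
  K = H x y / (1 + H x y ^ 2) * laplacian f H x y
      - gradsq f H x y / (1 + H x y ^ 2)
      + H x y ^ 4 / (1 + H x y ^ 2) /\
  (0 < H x y ->
     K = H x y ^ 2 / (1 + H x y ^ 2) *
           laplacian f (fun a b => ln (exp (u a b) * H a b)) x y /\
     K = H x y ^ 2 / (1 + H x y ^ 2) *
           (laplacian f (fun a b => ln (H a b)) x y + H x y ^ 2)).
Proof.
  intros HU Hsmooth Himm Hsigma Hsol x y Hxy H K u. subst H K u; cbv zeta.
  assert (Hsq : sigma * sigma = 1) by (destruct Hsigma; subst; ring).
  assert (Hpos : 0 < 1 + meanH sigma f x y ^ 2) by nra.
  assert (HK : gaussK f x y = (meanH sigma f x y * laplacian f (meanH sigma f) x y
                 - gradsq f (meanH sigma f) x y + meanH sigma f x y ^ 4) / (1 + meanH sigma f x y ^ 2)).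
  { rewrite <- (gaussK_soliton U f HU Hsmooth Himm sigma Hsq Hsol x y Hxy). field. lra. }
  rewrite HK, (laplacian_ln_sqrt_meanH U f) by assumption.
  split; [|split]; [field; lra .. |].
  intro HH.
  rewrite (laplacian_ln_exp_height_meanH U f), (laplacian_ln_meanH U f),
    (laplacian_height U f HU Hsmooth Himm sigma Hsq) by assumption.
  assert (Hxi : normal sigma f x y 2%nat = - meanH sigma f x y) by (rewrite Hsol by assumption; ring).
  rewrite Hxi. split; field; lra.
Qed.
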